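(* Fix a target miscoverage level $\bar\alpha\in(0,1)$, a threshold $\lambda_{\max}>0$, and a constant $c\in(0,1)$, and set $\gamma=c\lambda_{\max}$ (so $\gamma\in(0,\lambda_{\max})$). Consider any sequence of weights $(\lambda_t)_{t\ge1}$, actions $(\alpha_t)_{t\ge1}\subset[0,1]$, and error indicators $(\mathrm{err}_t)_{t\ge1}\subset\{0,1\}$ generated as follows, where everything other than the rules below (the data, the planned actions $\alpha^\star_{t|t}$ when $\lambda_t>0$, and the errors when $\alpha_t\in(0,1)$) may be arbitrary, even adversarial: (i) $\lambda_1\in[-\gamma\bar\alpha,\ \lambda_{\max}+\gamma(1-\bar\alpha)]$ (e.g. $\lambda_1\in[0,\lambda_{\max}]$); (ii) at each time $t$, a planned action $\alpha^\star_{t|t}\in[0,1]$ is produced by some procedure satisfying $\alpha^\star_{t|t}=1$ whenever $\lambda_t\le 0$; (iii) $\alpha_t=0$ if $\lambda_t\ge\lambda_{\max}$ and $\alpha_t=\alpha^\star_{t|t}$ otherwise; (iv) $\mathrm{err}_t=\mathbf 1(Y_t\notin C_t(1-\alpha_t))$, where the prediction sets satisfy $C_t(1-0)=\mathcal Y$ (so $\mathrm{err}_t=0$ when $\alpha_t=0$) and $\mathrm{err}_t=1$ when $\alpha_t=1$; (v) $\lambda_{t+1}=\lambda_t-\gamma(\bar\alpha-\mathrm{err}_t)$. Then for every $m\ge 0$ and every $K\ge1$, $$\left|\frac1K\sum_{t=m+1}^{m+K}\mathrm{err}_t-\bar\alpha\right|\le\frac{c+1}{cK}.$$ In particular $\lim_{K\to\infty}\frac1K\sum_{t=1}^K\mathrm{err}_t=\bar\alpha$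 for every realization, hence $\limsup_{K\to\infty}\frac1K\sum_{t=1}^K \mathbf 1(Y_t\notin C_t(1-\alpha_t))\le\bar\alpha$ almost surely, uniformly over all joint distributions of the time series.
   Context: This is the Bellman Conformal Inference (BCI) procedure for online calibration of prediction intervals. A time series $Y_1,Y_2,\dots$ takes values in a space $\mathcal Y$; at each time $t$ a forecaster provides nested prediction sets $C_t(1-\beta)\subset\mathcal Y$, $\beta\in[0,1]$, where $\beta$ is the nominal miscoverage rate and smaller $\beta$ gives a larger set, with the safeguard $C_t(1-0)=\mathcal Y$. The procedure chooses a nominal miscoverage rate $\alpha_t$ and outputs $C_t(1-\alpha_t)$; $\mathrm{err}_t$ indicates that $Y_t$ is not covered. The planned action $\alpha^\star_{t|t}$ is in the paper the first-period minimizer of a stochastic control problem whose objective is (expected sum of interval lengths) $+\lambda_t\cdot$(excess average miscoverage), but only property (ii) is used. *)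

From HB Require Import structures.
From mathcomp Require Import all_boot all_order all_algebra.
From mathcomp Require Import all_classical all_reals all_analysis.
Set Implicit Arguments. Unset Strict Implicit. Unset Printing Implicit Defensive.
Import Order.TTheory GRing.Theory Num.Theory.
Import numFieldNormedType.Exports.
Local Open Scope ring_scope.
Local Open Scope classical_set_scope.

Definition window_avg (R : realType) (err : nat -> R) (m K : nat) : R :=
  (\sum_(m.+1 <= t < (m + K).+1) err t) / K%:R.

(** The weight [lambda] is a clipped online gradient step on the miscoverage:
    above [lmax] the full set is output, so no error occurs and [lambda]
    decreases; at or below [0] the planned miscoverage is [1], so an error
    occurs and [lambda] increases.  Hence [lambda] stays in a fixed interval of length
    [lmax + gamma], and since each update moves [lambda] by
    [gamma * (err t - abar)], the errors over any window of [K] steps sum to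
    [K * abar] up to [(lmax + gamma) / gamma]. *)

From HB Require Import structures.
From mathcomp Require Import all_boot all_order all_algebra.
From mathcomp Require Import all_classical all_reals all_analysis.
From mathcomp Require Import ring lra.
Import Order.TTheory GRing.Theory Num.Theory.
Import numFieldNormedType.Exports.
Local Open Scope ring_scope.
Local Open Scope classical_set_scope.

Lemma cvg_of_dev_le_div (R : realType) (u : nat -> R) (a B : R) :
  (forall K, (1 <= K)%N -> `|u K - a| <= B / K%:R) -> u @ \oo --> a.
Proof.
move=> dev_le; apply/cvgrPdist_le => e e0; near=> n.
have n1 : (1 <= n)%N by near: n; exact: nbhs_infty_ge.
have n0 : 0 < n%:R :> R by rewrite ltr0n.
rewrite distrC (le_trans (dev_le n n1)) // ler_pdivrMr // -ler_pdivrMl // mulrC.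
by near: n; exact: nbhs_infty_ger.
Unshelve. all: by end_near.
Qed.

Section ClippedWeightRecursion.
Variables (R : realType) (abar lmax gamma : R) (lambda err : nat -> R).
Hypotheses (abar_ge0 : 0 <= abar) (abar_le1 : abar <= 1).
Hypotheses (lmax_ge0 : 0 <= lmax) (gamma_gt0 : 0 < gamma).
Hypothesis err01 : forall t, (1 <= t)%N -> err t = 0 \/ err t = 1.
Hypothesis err_eq0_high : forall t, (1 <= t)%N -> lmax <= lambda t -> err t = 0.
Hypothesis err_eq1_low : forall t, (1 <= t)%N -> lambda t <= 0 -> err t = 1.
Hypothesis lambda_step : forall t, (1 <= t)%N ->
  lambda t.+1 = lambda t - gamma * (abar - err t).

Definition lambda_range (l : R) :=
  - gamma * abar <= l <= lmax + gamma * (1 - abar).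

Lemma lambda_in_range :
  lambda_range (lambda 1%N) -> forall n, lambda_range (lambda n.+1).
Proof.
have down_ge0 : 0 <= gamma * abar by rewrite mulr_ge0 // ltW.
have up_ge0 : 0 <= gamma * (1 - abar) by rewrite mulr_ge0 ?subr_ge0 // ltW.
move=> range1; elim=> [|n /andP[lo hi]] //.
rewrite /lambda_range lambda_step //.
have [high | low] := lerP lmax (lambda n.+1).
  have lambda_ge0 := le_trans lmax_ge0 high.
  by rewrite err_eq0_high //; apply/andP; split; lra.
have [nonpos | pos] := lerP (lambda n.+1) 0.
  by rewrite err_eq1_low //; apply/andP; split; lra.
by case: (err01 _ (ltn0Sn n)) => ->; apply/andP; split; lra.
Qed.

Lemma sum_err_sub_abar m K :
  \sum_(m.+1 <= t < (m + K).+1) (err t - abar)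
    = (lambda (m + K).+1 - lambda m.+1) / gamma.
Proof.
rewrite (telescope_sumr_eq (fun t => lambda t / gamma)) ?ltnS ?leq_addr //.
  by rewrite mulrBl.
move=> t /andP[t_gt _]; rewrite lambda_step; last exact: leq_trans t_gt.
by field; rewrite gt_eqF.
Qed.

Lemma window_avg_dev_le m K : lambda_range (lambda 1%N) -> (1 <= K)%N ->
  `|window_avg err m K - abar| <= (lmax + gamma) / (gamma * K%:R).
Proof.
move=> range1 K_gt0.
have K_pos : 0 < K%:R :> R by rewrite ltr0n.
have -> : window_avg err m K - abar
    = (\sum_(m.+1 <= t < (m + K).+1) (err t - abar)) / K%:R.
  rewrite /window_avg sumrB sumr_const_nat subSS addnC addnK.
  by field; rewrite gt_eqF.
have /andP[lo1 hi1] := lambda_in_range range1 (m + K).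
have /andP[lo2 hi2] := lambda_in_range range1 m.
have drift_le : `|lambda (m + K).+1 - lambda m.+1| <= lmax + gamma.
  by rewrite ler_norml; apply/andP; split; nra.
rewrite sum_err_sub_abar !normrM !normfV (gtr0_norm gamma_gt0) (gtr0_norm K_pos).
rewrite invfM mulrA; do 2 rewrite ler_pM2r ?invr_gt0 //.
Qed.

End ClippedWeightRecursion.

Theorem theorem1 (R : realType) (abar lmax c : R)
  (Y : Type) (y : nat -> Y) (C : nat -> R -> set Y)
  (lambda astar alpha err : nat -> R) :
  0 < abar < 1 -> 0 < lmax -> 0 < c < 1 ->
  (* nested prediction sets C_t(1 - beta), with safeguard C_t(1 - 0) = Y *)
  (forall t b1 b2, 0 <= b1 -> b1 <= b2 -> b2 <= 1 ->
      C t (1 - b2) `<=` C t (1 - b1)) ->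
  (forall t, C t (1 - 0) = setT) ->
  (* (i) *)
  - (c * lmax) * abar <= lambda 1%N <= lmax + (c * lmax) * (1 - abar) ->
  (* (ii) *)
  (forall t, (1 <= t)%N -> 0 <= astar t <= 1) ->
  (forall t, (1 <= t)%N -> lambda t <= 0 -> astar t = 1) ->
  (* (iii) *)
  (forall t, (1 <= t)%N ->
      alpha t = if lmax <= lambda t then 0 else astar t) ->
  (* (iv) *)
  (forall t, (1 <= t)%N -> err t = 0 \/ err t = 1) ->
  (forall t, (1 <= t)%N -> (err t = 1 <-> ~ C t (1 - alpha t) (y t))) ->
  (forall t, (1 <= t)%N -> alpha t = 1 -> err t = 1) ->
  (* (v) *)
  (forall t, (1 <= t)%N ->
      lambda t.+1 = lambda t - (c * lmax) * (abar - err t)) ->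
  (forall m K : nat, (1 <= K)%N ->
      `| window_avg err m K - abar | <= (c + 1) / (c * K%:R))
  /\ (window_avg err 0 @ \oo --> abar).
Proof.
move=> /andP[abar_gt0 abar_lt1] lmax_gt0 /andP[c_gt0 _] _ C_full range1 _
  astar_low alpha_def err01 err_iff err_alpha1 step.
have gamma_gt0 : 0 < c * lmax by rewrite mulr_gt0.
have err_high t : (1 <= t)%N -> lmax <= lambda t -> err t = 0.
  move=> t_gt high; case: (err01 t t_gt) => // err1.
  by move: err1; rewrite err_iff // alpha_def // high C_full => /(_ I).
have err_low t : (1 <= t)%N -> lambda t <= 0 -> err t = 1.
  move=> t_gt low; apply: err_alpha1 => //.
  by rewrite alpha_def // ifN ?astar_low // -ltNge (le_lt_trans low).
have dev_le m K : (1 <= K)%N ->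
    `|window_avg err m K - abar| <= (c + 1) / (c * K%:R).
  move=> K_gt0.
  rewrite (_ : (c + 1) / _ = (lmax + c * lmax) / (c * lmax * K%:R)).
    by apply: (@window_avg_dev_le _ _ _ _ lambda) => //; apply: ltW.
  by field; rewrite !gt_eqF ?ltr0n.
split=> //; apply: (@cvg_of_dev_le_div _ _ _ ((c + 1) / c)) => K K_gt0.
by rewrite -mulrA -invfM; exact: dev_le.
Qed.
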